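(* For every extended regular expression $r$ and every literal $B$, \[ \llbracket \Delta_B(r)\rrbracket \;\supseteq\; \bigcup_{a\in B}\llbracket \partial_a(r)\rrbracket \qquad\text{and}\qquad \llbracket \nabla_B(r)\rrbracket \;\subseteq\; \bigcap_{a\in B}\llbracket \partial_a(r)\rrbracket , \] where the empty intersection is $\Sigma^*$.
   Context: $\Sigma$ is a countable (possibly infinite) alphabet, $\Sigma^*$ the set of finite words, $\epsilon$ the empty word. Literals are sets of symbols drawn from a fixed family $U\subseteq\mathcal P(\Sigma)$ containing $\emptyset$, $\Sigma$ and all singletons and closed under union, intersection and complement $\overline{A}=\Sigma\setminus A$. Extended regular expressions (EREs) are generated by $r,s ::= \epsilon \mid A \mid r+s \mid r\cdot s \mid r^* \mid r\,\&\,s \mid \neg r$ with $A$ a literal; the empty literal is written $\emptyset$. Semantics: $\llbracket\epsilon\rrbracket=\{\epsilon\}$, $\llbracket A\rrbracket=A$ (words of length one), $\llbracket r+s\rrbracket=\llbracket r\rrbracket\cup\llbracket s\rrbracket$, $\llbracket r\cdot s\rrbracket$ the concatenation, $\llbracket r^*\rrbracket=\llbracket r\rrbracket^*$, $\llbracket r\&s\rrbracket=\llbracket r\rrbracket\cap\llbracket s\rrbracket$, $\llbracket\neg r\rrbracket=\Sigma^*\setminus\llbracket r\rrbracket$. Nullability: $\nu(\epsilon)=\nu(r^* )=\mathit{true}$, $\nu(A)=\mathit{false}$, $\nu(r+s)=\nu(r)\vee\nu(s)$, $\nu(r\cdot s)=\nu(r\&s)=\nu(r)\wedge\nu(s)$,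 $\nu(\neg r)=\neg\nu(r)$. Brzozowski derivative for $a\in\Sigma$: $\partial_a(\epsilon)=\emptyset$; $\partial_a(A)=\epsilon$ if $a\in A$, else $\emptyset$; $\partial_a(r+s)=\partial_a(r)+\partial_a(s)$; $\partial_a(r\cdot s)=\partial_a(r)\cdot s+\partial_a(s)$ if $\nu(r)$, and $\partial_a(r)\cdot s$ otherwise; $\partial_a(r^* )=\partial_a(r)\cdot r^*$; $\partial_a(r\&s)=\partial_a(r)\&\partial_a(s)$; $\partial_a(\neg r)=\neg\partial_a(r)$. Positive and negative derivatives with respect to a nonempty literal $B$ are defined by simultaneous recursion: $\Delta_B(\epsilon)=\nabla_B(\epsilon)=\emptyset$; $\Delta_B(A)=\epsilon$ if $A\cap B\neq\emptyset$, else $\emptyset$; $\nabla_B(A)=\epsilon$ if $B\subseteq A$ (i.e. $B\cap\overline{A}=\emptyset$), else $\emptyset$; for $\square\in\{\Delta,\nabla\}$: $\square_B(r+s)=\square_B(r)+\square_B(s)$, $\square_B(r\cdot s)=\square_B(r)\cdot s+\square_B(s)$ if $\nu(r)$ and $\square_B(r)\cdot s$ otherwise, $\square_B(r^* )=\square_B(r)\cdot r^*$, $\square_B(r\&s)=\square_B(r)\&\square_B(s)$; and $\Delta_B(\neg r)=\neg\nabla_B(r)$, $\nabla_B(\neg r)=\neg\Delta_B(r)$. For the empty literal, $\Delta_\emptyset(r)=\emptyset$ and $\nabla_\emptyset(r)=\neg\emptyset$ (denoting $\Sigma^*$). *)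

From mathcomp Require Import all_boot.
From Stdlib Require Import ClassicalEpsilon.
Set Implicit Arguments.
Unset Strict Implicit.
Unset Printing Implicit Defensive.

Definition pb (P : Prop) : bool :=
  if excluded_middle_informative P then true else false.

Definition symset (S : Type) := S -> Prop.

Record literal_family (S : Type) (U : symset S -> Prop) : Prop := {
  lf_empty : U (fun _ => False);
  lf_full  : U (fun _ => True);
  lf_single : forall a : S, U (fun x => x = a);
  lf_union : forall A B, U A -> U B -> U (fun x => A x \/ B x);
  lf_inter : forall A B, U A -> U B -> U (fun x => A x /\ B x);
  lf_compl : forall A, U A -> U (fun x => ~ A x)
}.

Inductive ere (S : Type) : Type :=
  | Eps
  | Lit of symset S
  | Plus of ere S & ere S
  | Cat of ere S & ere S
  | Star of ere S
  | And of ere S & ere S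
  | Neg of ere S.

Arguments Eps {S}.

Fixpoint lits_in (S : Type) (U : symset S -> Prop) (r : ere S) : Prop :=
  match r with
  | Eps => True
  | Lit A => U A
  | Plus r s | Cat r s | And r s => lits_in U r /\ lits_in U s
  | Star r | Neg r => lits_in U r
  end.

Definition EmptyL (S : Type) : ere S := Lit (fun _ : S => False).

Fixpoint lang (S : Type) (r : ere S) (w : seq S) : Prop :=
  match r with
  | Eps => w = [::]
  | Lit A => exists a, w = [:: a] /\ A a
  | Plus r s => lang r w \/ lang s w
  | Cat r s => exists u v, w = u ++ v /\ lang r u /\ lang s v
  | Star r => exists ws : seq (seq S),
                w = flatten ws /\ (forall u, List.In u ws -> lang r u)
  | And r s => lang r w /\ lang s w
  | Neg r => ~ lang r w
  end.

Fixpoint nu (S : Type) (r : ere S) : bool :=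
  match r with
  | Eps => true
  | Lit _ => false
  | Plus r s => nu r || nu s
  | Cat r s | And r s => nu r && nu s
  | Star _ => true
  | Neg r => ~~ nu r
  end.

Fixpoint bder (S : Type) (a : S) (r : ere S) : ere S :=
  match r with
  | Eps => EmptyL S
  | Lit A => if pb (A a) then Eps else EmptyL S
  | Plus r s => Plus (bder a r) (bder a s)
  | Cat r s => if nu r then Plus (Cat (bder a r) s) (bder a s)
               else Cat (bder a r) s
  | Star r => Cat (bder a r) (Star r)
  | And r s => And (bder a r) (bder a s)
  | Neg r => Neg (bder a r)
  end.

(* positive / negative derivatives w.r.t. a (nonempty) literal B *)
Fixpoint dpos (S : Type) (B : symset S) (r : ere S) : ere S :=
  match r with
  | Eps => EmptyL S
  | Lit A => if pb (exists x, A x /\ B x) then Eps else EmptyL S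
  | Plus r s => Plus (dpos B r) (dpos B s)
  | Cat r s => if nu r then Plus (Cat (dpos B r) s) (dpos B s)
               else Cat (dpos B r) s
  | Star r => Cat (dpos B r) (Star r)
  | And r s => And (dpos B r) (dpos B s)
  | Neg r => Neg (dneg B r)
  end
with dneg (S : Type) (B : symset S) (r : ere S) : ere S :=
  match r with
  | Eps => EmptyL S
  | Lit A => if pb (forall x, B x -> A x) then Eps else EmptyL S
  | Plus r s => Plus (dneg B r) (dneg B s)
  | Cat r s => if nu r then Plus (Cat (dneg B r) s) (dneg B s)
               else Cat (dneg B r) s
  | Star r => Cat (dneg B r) (Star r)
  | And r s => And (dneg B r) (dneg B s)
  | Neg r => Neg (dpos B r)
  end.

Definition Delta (S : Type) (B : symset S) (r : ere S) : ere S :=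
  if pb (exists x, B x) then dpos B r else EmptyL S.
Definition Nabla (S : Type) (B : symset S) (r : ere S) : ere S :=
  if pb (exists x, B x) then dneg B r else Neg (EmptyL S).

(* Fix a ∈ B.  A simultaneous induction on r shows
   [[∇_B r]] ⊆ [[∂_a r]] ⊆ [[Δ_B r]]: the two inclusions must be proved
   together because negation swaps Δ and ∇ and reverses inclusion.  At a
   literal A, a ∈ A ∩ B witnesses that A meets B, and B ⊆ A gives a ∈ A.
   Since B is nonempty, Δ_B and ∇_B are the recursive derivatives. *)
From mathcomp Require Import all_boot.
From Stdlib Require Import ClassicalEpsilon.

Lemma pbP (P : Prop) : reflect P (pb P).
Proof. by rewrite /pb; case: excluded_middle_informative => ?; constructor. Qed.

Section LanguageInclusion.

Variable S : Type.
Implicit Types r s : ere S.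

Definition sublang r s : Prop := forall w, lang r w -> lang s w.

Lemma sublang_plus r r' s s' :
  sublang r r' -> sublang s s' -> sublang (Plus r s) (Plus r' s').
Proof. by move=> rr' ss' w [?|?]; [left|right]; auto. Qed.

Lemma sublang_catl r r' s : sublang r r' -> sublang (Cat r s) (Cat r' s).
Proof. by move=> rr' w [u [v [-> [? ?]]]]; exists u, v; auto. Qed.

Lemma sublang_and r r' s s' :
  sublang r r' -> sublang s s' -> sublang (And r s) (And r' s').
Proof. by move=> rr' ss' w [? ?]; split; auto. Qed.

Lemma sublang_neg r r' : sublang r r' -> sublang (Neg r') (Neg r).
Proof. by move=> rr' w nr' lr; exact: nr' (rr' w lr). Qed.

Lemma sublang_empty s : sublang (EmptyL S) s.
Proof. by move=> w [? []]. Qed.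

End LanguageInclusion.

Arguments sublang {S}.

Lemma dneg_sub_bder_sub_dpos {S : Type} {B : symset S} {a : S} : B a ->
  forall r : ere S, sublang (dneg B r) (bder a r) /\ sublang (bder a r) (dpos B r).
Proof.
move=> Ba; elim=> [|A|r1 [N1 P1] r2 [N2 P2]|r1 [N1 P1] r2 [N2 P2]|r1 [N1 P1]
                  |r1 [N1 P1] r2 [N2 P2]|r1 [N1 P1]] /=.
- by split; apply: sublang_empty.
- split.
  + case: pbP => [BsubA|_]; last exact: sublang_empty.
    by case: pbP => [_ w | /(_ (BsubA a Ba))].
  + case: pbP => [Aa|_]; last exact: sublang_empty.
    by case: pbP => [_ w | []]; last by exists a.
- by split; apply: sublang_plus.
- by case: (nu r1); split; do ?apply: sublang_plus; do ?apply: sublang_catl.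
- by split; apply: sublang_catl.
- by split; apply: sublang_and.
- by split; apply: sublang_neg.
Qed.

Theorem lemma1 (S : countType) (U : symset S -> Prop)
  (HU : literal_family U) (r : ere S) (B : symset S)
  (Hr : lits_in U r) (HB : U B) :
  (forall (a : S) (w : seq S), B a -> lang (bder a r) w -> lang (Delta B r) w) /\
  (forall w : seq S, lang (Nabla B r) w ->
     forall a : S, B a -> lang (bder a r) w).
Proof.
split=> [a w Ba | w + a Ba]; have [dneg_sub dpos_sup] := dneg_sub_bder_sub_dpos Ba r.
- by rewrite /Delta (introT (pbP _)); [exact: dpos_sup | exists a].
- by rewrite /Nabla (introT (pbP _)); [exact: dneg_sub | exists a].
Qed.
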